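(* Let $k$ be a positive integer. For every integer $n\ge1$, $$D_k^e(n)-D_k^o(n)=\begin{cases}(-1)^m, & \text{if } 1\le n=\tfrac12 m(3m\pm1)\le k-1 \text{ for some integer } m,\\ P_e^{(k)}(d,n)-P_o^{(k)}(d,n), & \text{if } k-1<n\le \tfrac12 k(k-1),\\ 0,&\text{otherwise.}\end{cases}$$
   Context: $D_k(n)$ is the number of partitions of $n$ into non-negative parts (the part $0$ is allowed) in which the smallest part appears exactly $k$ times and no other part is repeated. $D_k^e(n)$ (resp. $D_k^o(n)$) is the number of such partitions in which the number of parts greater than the smallest part is even (resp. odd). $P_e^{(k)}(d,n)$ (resp. $P_o^{(k)}(d,n)$) is the number of partitions of $n$ into an even (resp. odd) number of distinct positive parts, none exceeding $k-1$. *)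

From mathcomp Require Import all_boot all_algebra.
Set Implicit Arguments. Unset Strict Implicit. Unset Printing Implicit Defensive.

(* A partition of n into non-negative parts is encoded by its multiplicity
   function: m i = number of times the part i occurs (i = 0..n; no part of a
   partition of n exceeds n).  Multiplicities are taken in 'I_(n+k).+1; under
   the defining constraints of D_k every multiplicity is <= k, so this bound
   excludes no relevant partition. *)
Definition mult_fun (n k : nat) := {ffun 'I_n.+1 -> 'I_(n + k).+1}.

Definition is_Dk (k n : nat) (m : mult_fun n k) (s : 'I_n.+1) : bool :=
  [&& \sum_(i < n.+1) i * m i == n,
      m s == k :> nat,
      [forall i : 'I_n.+1, (i < s) ==> (m i == 0 :> nat)] &
      [forall i : 'I_n.+1, (s < i) ==> (m i <= 1)]].

Definition parts_above (n k : nat) (m : mult_fun n k) (s : 'I_n.+1) : nat :=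
  \sum_(i < n.+1 | s < i) m i.

Definition Dk_par (k n : nat) (b : bool) : nat :=
  #|[set m : mult_fun n k |
      [exists s : 'I_n.+1, is_Dk m s && (odd (parts_above m s) == b)]]|.

Definition Dk_e k n := Dk_par k n false.
Definition Dk_o k n := Dk_par k n true.

(* P_e^{(k)}(d,n) (b = false) and P_o^{(k)}(d,n) (b = true): partitions of n
   into distinct positive parts none exceeding k-1, i.e. subsets of {1..k-1}
   with sum n, with an even / odd number of parts. *)
Definition Pk_par (k n : nat) (b : bool) : nat :=
  #|[set S : {set 'I_k} |
      [&& [forall i in S, 0 < (i : nat)],
          \sum_(i in S) (i : nat) == n &
          odd #|S| == b]]|.

Definition Pk_e k n := Pk_par k n false.
Definition Pk_o k n := Pk_par k n true.

Import GRing.Theory.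
Local Open Scope ring_scope.
Definition pentagonal_index (n : nat) (m : int) : Prop :=
  ((2 * n)%N)%:Z = m * (3 * m + 1) \/ ((2 * n)%N)%:Z = m * (3 * m - 1).

(* Sorting the partitions counted by D_k(n) by their smallest part s, the
   signed count D_k^e(n) - D_k^o(n) is the coefficient of q^n in
     G_k(q) = sum_(s <= n) q^(k s) prod_(s < i <= n) (1 - q^i).
   Splitting off the factor 1 - q^(s+1) gives
   G_(k+1) = (1 - q^k) G_k + q^(k (n+1)), so G_k agrees with
   prod_(0 < i < k) (1 - q^i) up to degree n, and the q^n-coefficient of this
   product is P_e^(k)(d,n) - P_o^(k)(d,n); it vanishes beyond the degree
   k(k-1)/2.  For n <= k - 1 = N the coefficient is read off from Shanks'
   finite form of Euler's pentagonal number theorem,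
     sum_(j <= N) (-1)^j q^(N j + j(j+1)/2) prod_(j < i <= N) (1 - q^i)
       = sum_(j <= N) (-1)^j (q^(j(3j-1)/2) + q^(j(3j+1)/2)) - 1,
   whose terms with j > 0 on the left have degree > N. *)

From mathcomp Require Import all_boot all_algebra.
From mathcomp Require Import zify ring.
Set Implicit Arguments.
Unset Strict Implicit.
Unset Printing Implicit Defensive.
Import GRing.Theory Num.Theory.
Local Open Scope ring_scope.

(* pent_lo j = j(3j-1)/2 and pent_hi j = j(3j+1)/2 *)
Definition pent_lo (j : nat) : nat := j * j + 'C(j, 2).
Definition pent_hi (j : nat) : nat := j * j + 'C(j.+1, 2).

Section EulerProducts.
Variable R : comNzRingType.
Implicit Types p q r : {poly R}.

Lemma coefMsign n p i : ((-1) ^+ n * p)`_i = (-1) ^+ n * p`_i.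
Proof.
rewrite -signr_odd mulr_sign -signr_odd mulr_sign.
by case: (odd n); rewrite ?coefN.
Qed.

Lemma coef_prod_1subXn (I : finType) (P : pred I) (w : I -> nat) i :
  (\prod_(j | P j) (1 - 'X^(w j)) : {poly R})`_i =
  \sum_(A : {set I} | A \subset P)
     (-1) ^+ #|A| * ((\sum_(j in A) w j)%N == i)%:R.
Proof.
rewrite big_mkcond /=.
rewrite (eq_bigr (fun j => (if P j then - 'X^(w j) else 0) + 1)); last first.
  by move=> j _; case: (P j); rewrite ?add0r // addrC.
rewrite bigA_distr coef_sum [RHS]big_mkcond /=; apply: eq_bigr => A _.
case: ifP => [sAP | /negbT/subsetPn [j jA njP]]; last first.
  by rewrite (bigD1 j) //= jA ifN // mul0r coef0.
rewrite -big_mkcond /= (eq_bigr (fun j => - 'X^(w j))); last first.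
  by move=> j /(subsetP sAP); rewrite unfold_in => ->.
rewrite prodrN coefMsign -(big_morph _ (@exprD _ 'X) (expr0 'X)).
by rewrite coefXn eq_sym.
Qed.

Lemma coefM_low r p q n :
    (forall i, (i <= n)%N -> p`_i = q`_i) ->
  forall i, (i <= n)%N -> (r * p)`_i = (r * q)`_i.
Proof.
by move=> pq i le_in; rewrite !coefM; apply: eq_bigr => j _; rewrite pq //; lia.
Qed.

Definition euler_tail (j N : nat) : {poly R} :=
  \prod_(i < N.+1 | (j < i)%N) (1 - 'X^i).

Lemma euler_tail_id N : euler_tail N N = 1.
Proof. by rewrite /euler_tail big1 // => i; rewrite ltnNge -ltnS ltn_ord. Qed.

Lemma euler_tailS j N : (j < N)%N ->
  euler_tail j N = (1 - 'X^(j.+1)) * euler_tail j.+1 N.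
Proof.
move=> lt_jN; rewrite /euler_tail (bigD1 (Ordinal (lt_jN : j.+1 < N.+1)%N)) //=.
by congr (_ * _); apply: eq_bigl => i; rewrite -(inj_eq val_inj) /=; lia.
Qed.

Lemma euler_tail_ext j N : (j <= N)%N ->
  euler_tail j N.+1 = euler_tail j N * (1 - 'X^(N.+1)).
Proof.
move=> le_jN; rewrite /euler_tail big_mkcond big_ord_recr /= -big_mkcond /=.
by rewrite ltnS le_jN.
Qed.

Definition smallest_part_gf (n k : nat) : {poly R} :=
  \sum_(s < n.+1) 'X^(k * s) * euler_tail s n.

Lemma smallest_part_gfS n k :
  smallest_part_gf n k.+1 = (1 - 'X^k) * smallest_part_gf n k + 'X^(k * n.+1).
Proof.
pose S := \sum_(s < n) 'X^(k * s.+1) * euler_tail s n.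
have gf_diff : smallest_part_gf n k - smallest_part_gf n k.+1 = S.
  rewrite /smallest_part_gf -sumrB big_ord_recl /= !muln0 subrr add0r.
  apply: eq_bigr => s _; rewrite /bump /= add1n (euler_tailS (ltn_ord s)).
  rewrite mulSn exprD; ring.
have gf_shift : 'X^k * smallest_part_gf n k = S + 'X^(k * n.+1).
  rewrite /smallest_part_gf mulr_sumr big_ord_recr /= euler_tail_id mulr1.
  rewrite mulnS exprD; congr (_ + _).
  by apply: eq_bigr => s _; rewrite mulnS exprD mulrA.
rewrite -[LHS](subKr (smallest_part_gf n k)) gf_diff.
have -> : S = 'X^k * smallest_part_gf n k - 'X^(k * n.+1).
  by rewrite gf_shift addrK.
ring.
Qed.

Lemma coef_smallest_part_gf n N i : (i <= n)%N ->
  (smallest_part_gf n N.+1)`_i = (euler_tail 0 N)`_i.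
Proof.
elim: N i => [|N IH] i le_in.
  by rewrite smallest_part_gfS mul0n expr0 subrr mul0r add0r euler_tail_id.
have neq_i : (i == N.+1 * n.+1)%N = false by apply/eqP; nia.
rewrite smallest_part_gfS coefD coefXn neq_i addr0.
by rewrite (coefM_low _ IH) // euler_tail_ext // mulrC.
Qed.

Definition shanks_term (N j : nat) : {poly R} :=
  (-1) ^+ j * 'X^(N * j + 'C(j.+1, 2)) * euler_tail j N.

Lemma shanks_sum_telescope N :
  \sum_(j < N.+1) (shanks_term N.+1 j - shanks_term N j) =
  (-1) ^+ N.+1 * 'X^(pent_lo N.+1).
Proof.
pose B j : {poly R} :=
  if j is j'.+1 then (-1) ^+ j * 'X^(N.+1 * j + 'C(j, 2)) * euler_tail j' N
  else 0.
rewrite -(big_mkord xpredT (fun j => shanks_term N.+1 j - shanks_term N j)).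
rewrite (telescope_sumr_eq B) // => [|j /andP [_ lt_jN]].
  by rewrite /B subr0 euler_tail_id mulr1.
rewrite /shanks_term /B euler_tail_ext //.
case: j lt_jN => [|j] lt_jN.
  by rewrite subr0 !muln0 muln1 !addn0 expr0; ring.
rewrite (@euler_tailS j N lt_jN).
have bin2S : 'C(j.+2, 2) = ('C(j.+1, 2) + j.+1)%N by rewrite binS bin1.
set a := (N * j.+1 + 'C(j.+2, 2))%N.
have -> : (N.+1 * j.+1 + 'C(j.+2, 2) = a + j.+1)%N by rewrite /a; lia.
have -> : (N.+1 * j.+2 + 'C(j.+2, 2) = a + j.+1 + N.+1)%N by rewrite /a; lia.
have -> : (N.+1 * j.+1 + 'C(j.+1, 2) = a)%N by rewrite /a; lia.
rewrite !exprD !exprS; ring.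
Qed.

Lemma shanks_identity N :
  \sum_(j < N.+1) shanks_term N j =
  \sum_(j < N.+1) (-1) ^+ j * ('X^(pent_lo j) + 'X^(pent_hi j)) - 1.
Proof.
elim: N => [|N IH].
  rewrite !big_ord1 /shanks_term /pent_lo /pent_hi euler_tail_id /=.
  by rewrite !expr0 !mul1r addrK.
rewrite big_ord_recr /= -(subrK (\sum_(j < N.+1) shanks_term N j)
  (\sum_(j < N.+1) shanks_term N.+1 j)) -sumrB shanks_sum_telescope IH.
rewrite [in RHS]big_ord_recr /= /shanks_term euler_tail_id mulr1; ring.
Qed.

Lemma coef_euler_tail0 N n : (0 < n <= N)%N ->
  (euler_tail 0 N)`_n =
  \sum_(j < N.+1) (-1) ^+ j * ((n == pent_lo j)%:R + (n == pent_hi j)%:R).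
Proof.
move=> /andP [n_gt0 le_nN].
have -> : euler_tail 0 N =
    \sum_(j < N.+1) shanks_term N j - \sum_(j < N) shanks_term N j.+1.
  by rewrite big_ord_recl addrK /shanks_term muln0 expr0 !mul1r.
have high : (\sum_(j < N) shanks_term N j.+1)`_n = 0.
  rewrite coef_sum big1 // => j _.
  by rewrite /shanks_term -mulrA coefMsign coefXnM ifT ?mulr0 // binS bin1; nia.
rewrite coefB high subr0 shanks_identity.
rewrite coefB coef_sum coef1 (_ : (n == 0)%N = false) ?subr0; last by lia.
by apply: eq_bigr => j _; rewrite coefMsign coefD !coefXn.
Qed.
End EulerProducts.

Lemma card_set_int (T : finType) (P : pred T) :
  (#|[set x | P x]|)%:Z = \sum_(x : T) (P x : nat)%:R.
Proof.
rewrite -sum1_card -natz natr_sum big_mkcond /=; apply: eq_bigr => x _.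
by rewrite inE; case: (P x).
Qed.

Lemma is_Dk_smallest_uniq k n (m : mult_fun n k) s s' : (0 < k)%N ->
  is_Dk m s -> is_Dk m s' -> s = s'.
Proof.
move=> k_gt0 /and4P [_ /eqP ms /forallP below _].
move=> /and4P [_ /eqP ms' /forallP below' _].
apply: val_inj; case: (ltngtP s s') => // lt_ss.
  by have := below' s; rewrite lt_ss ms /= => /eqP k0; rewrite k0 in k_gt0.
by have := below s'; rewrite lt_ss ms' /= => /eqP k0; rewrite k0 in k_gt0.
Qed.

Lemma Dk_diff_by_smallest_part k n : (0 < k)%N ->
  (Dk_e k n)%:Z - (Dk_o k n)%:Z =
  \sum_(s : 'I_n.+1) \sum_(m : mult_fun n k)
     (if is_Dk m s then (-1) ^+ (parts_above m s) else 0).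
Proof.
move=> k_gt0; rewrite /Dk_e /Dk_o /Dk_par !card_set_int -sumrB exchange_big /=.
apply: eq_bigr => m _.
have [/existsP [s0 m_s0] | /existsPn no_s] := boolP [exists s, is_Dk m s];
  last first.
  have parity b : [exists s, is_Dk m s && (odd (parts_above m s) == b)] = false.
    by apply/existsP => [[s /andP [m_s _]]]; have := no_s s; rewrite m_s.
  by rewrite !parity subrr big1 // => s _; rewrite ifN.
have other s : s != s0 -> is_Dk m s = false.
  move=> ne; apply: contraNF ne => m_s.
  by rewrite (is_Dk_smallest_uniq k_gt0 m_s m_s0).
have parity b : [exists s, is_Dk m s && (odd (parts_above m s) == b)] =
                (odd (parts_above m s0) == b).
  apply/existsP/idP => [[s /andP [m_s]]|]; last by exists s0; rewrite m_s0.
  by rewrite (is_Dk_smallest_uniq k_gt0 m_s m_s0).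
rewrite (bigD1 s0) //= m_s0 big1 => [|s /other ->] //.
by rewrite addr0 !parity -signr_odd; case: (odd _).
Qed.

Section FixedSmallestPart.
Variables (k n : nat) (s : 'I_n.+1).
Hypothesis k_gt0 : (0 < k)%N.
Local Notation above := (fun i : 'I_n.+1 => (s < i)%N).
Implicit Types (i : 'I_n.+1) (A : {set 'I_n.+1}) (m : mult_fun n k).

Definition dk_mult A : mult_fun n k :=
  [ffun i : 'I_n.+1 => inord (if i == s then k else nat_of_bool (i \in A))].

Definition upper_parts (m : mult_fun n k) : {set 'I_n.+1} :=
  [set i : 'I_n.+1 | (s < i)%N && (m i == 1 :> nat)].

Lemma dk_multE A i : dk_mult A i = (if i == s then k else i \in A) :> nat.
Proof.
rewrite ffunE inordK //; case: ifP => _; first by rewrite ltnS leq_addl.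
by case: (i \in A); rewrite ltnS; lia.
Qed.

Lemma above_neq i : (s < i)%N -> (i == s) = false.
Proof. by move=> lt_si; apply/eqP => eq_is; rewrite eq_is ltnn in lt_si. Qed.

Lemma upper_parts_above m : upper_parts m \subset above.
Proof. by apply/subsetP => i; rewrite inE unfold_in => /andP []. Qed.

Lemma dk_multK A : A \subset above -> upper_parts (dk_mult A) = A.
Proof.
move=> /subsetP A_above; apply/setP => i; rewrite inE dk_multE.
have [lt_si | ge_si] := boolP (s < i)%N.
  by rewrite (above_neq lt_si); case: (i \in A).
by apply/esym/negP => /A_above; rewrite unfold_in (negbTE ge_si).
Qed.

Lemma upper_partsK m : is_Dk m s -> dk_mult (upper_parts m) = m.
Proof.
move=> /and4P [_ /eqP ms /forallP below /forallP above_le1].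
apply/ffunP => i; apply: val_inj; rewrite /= dk_multE inE.
have [-> | ne] := eqVneq i s; first by rewrite ms.
case: (ltngtP s i) => [lt_si | lt_is | eq_si] /=.
- by have := above_le1 i; rewrite lt_si /=; case: (nat_of_ord (m i)) => [|[|]].
- by have := below i; rewrite lt_is /= => /eqP ->.
- by rewrite -val_eqE /= eq_si eqxx in ne.
Qed.

Lemma sum_dk_mult A : A \subset above ->
  (\sum_(i < n.+1) i * dk_mult A i = k * s + \sum_(i in A) i)%N.
Proof.
move=> /subsetP A_above.
have s_notin : (s \in A) = false.
  by apply/negP => /A_above; rewrite unfold_in ltnn.
rewrite (bigD1 s) //= dk_multE eqxx mulnC; congr (_ + _)%N.
rewrite [RHS]big_mkcond [RHS](bigD1 s) //= s_notin add0n.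
apply: eq_bigr => i /negbTE ne.
by rewrite dk_multE ne; case: (i \in A); rewrite ?muln1 ?muln0.
Qed.

Lemma parts_above_dk_mult A : A \subset above ->
  parts_above (dk_mult A) s = #|A|.
Proof.
move=> /subsetP A_above; rewrite /parts_above -sum1_card [RHS]big_mkcond.
rewrite [RHS](bigID above) /= [X in _ = (_ + X)%N]big1 ?addn0 => [|i ge_si].
  by apply: eq_bigr => i lt_si; rewrite dk_multE above_neq //; case: (i \in A).
by case: ifP => // /A_above; rewrite unfold_in (negbTE ge_si).
Qed.

Lemma is_Dk_dk_mult A : A \subset above ->
  is_Dk (dk_mult A) s = (k * s + \sum_(i in A) i == n)%N.
Proof.
move=> A_above; rewrite /is_Dk sum_dk_mult // dk_multE eqxx eqxx /=.
case: (_ == n) => //=; move/subsetP: A_above => A_above.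
apply/andP; split; apply/forallP => i; apply/implyP => lt_i; rewrite dk_multE.
  rewrite ifN; last by apply/eqP => eq_is; rewrite eq_is ltnn in lt_i.
  by case: (boolP (i \in A)) => // /A_above /(ltn_trans lt_i); rewrite ltnn.
by rewrite above_neq //; case: (i \in A).
Qed.

Lemma Dk_signed_count_at :
  \sum_(m : mult_fun n k) (if is_Dk m s then (-1) ^+ (parts_above m s) else 0)
  = ('X^(k * s) * euler_tail int s n)`_n.
Proof.
rewrite -big_mkcond /= (reindex_onto dk_mult upper_parts upper_partsK) /=.
rewrite coefXnM /euler_tail coef_prod_1subXn.
have cond A : is_Dk (dk_mult A) s && (upper_parts (dk_mult A) == A) =
              (A \subset above) && (k * s + \sum_(i in A) i == n)%N.
  have [A_above | not_above] := boolP (A \subset above).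
    by rewrite dk_multK // eqxx andbT is_Dk_dk_mult.
  apply/negbTE; apply: contra not_above => /andP [_ /eqP <-].
  exact: upper_parts_above.
rewrite (eq_bigl _ _ cond) big_mkcondr /=.
have [lt_n | le_n] := ltnP n (k * s).
  by rewrite big1 // => A _; rewrite ifN //; apply/eqP; lia.
apply: eq_bigr => A A_above; rewrite parts_above_dk_mult //.
have -> : (k * s + \sum_(i in A) i == n)%N = (\sum_(i in A) i == n - k * s)%N.
  by apply/eqP/eqP; lia.
by case: eqP; rewrite ?mulr1 ?mulr0.
Qed.
End FixedSmallestPart.

Lemma Dk_diff_coef k n : (0 < k)%N ->
  (Dk_e k n)%:Z - (Dk_o k n)%:Z = (smallest_part_gf int n k)`_n.
Proof.
move=> k_gt0; rewrite Dk_diff_by_smallest_part // coef_sum.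
by apply: eq_bigr => s _; apply: Dk_signed_count_at.
Qed.

Lemma Pk_diff_coef N n :
  (Pk_e N.+1 n)%:Z - (Pk_o N.+1 n)%:Z = (euler_tail int 0 N)`_n.
Proof.
rewrite /Pk_e /Pk_o /Pk_par !card_set_int -sumrB /euler_tail coef_prod_1subXn.
rewrite [RHS]big_mkcond /=; apply: eq_bigr => S _.
have -> : [forall i in S, (0 < i)%N] =
          (S \subset (fun i : 'I_N.+1 => (0 < i)%N)).
  by apply/forall_inP/subsetP => S_pos i /S_pos.
case: (S \subset _) => /=; last by rewrite subrr.
case: (_ == n) => /=; last by rewrite mulr0 subrr.
by rewrite mulr1 -signr_odd; case: (odd #|S|).
Qed.

Lemma Dk_diff_eq_Pk_diff k n : (0 < k)%N ->
  (Dk_e k n)%:Z - (Dk_o k n)%:Z = (Pk_e k n)%:Z - (Pk_o k n)%:Z.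
Proof.
case: k => // N _.
by rewrite Dk_diff_coef // coef_smallest_part_gf // Pk_diff_coef.
Qed.

Lemma bin2_double j : (2 * 'C(j, 2) = j * j.-1)%N.
Proof.
by elim: j => // j IH; rewrite binS bin1 /=; case: j IH => //= j; nia.
Qed.

Lemma double_pent_lo j : (2 * pent_lo j + j = 3 * j * j)%N.
Proof. by rewrite /pent_lo; have := bin2_double j; case: j => //= j; nia. Qed.

Lemma double_pent_hi j : (2 * pent_hi j = 3 * j * j + j)%N.
Proof. by rewrite /pent_hi; have := bin2_double j.+1; rewrite /=; nia. Qed.

Lemma pent_index_inj n x y : (0 < x)%N ->
  (n == pent_lo x) || (n == pent_hi x) ->
  (n == pent_lo y) || (n == pent_hi y) -> x = y.
Proof.
move=> x_gt0 /orP [] /eqP -> /orP [] /eqP e;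
  have := double_pent_lo x; have := double_pent_hi x;
  have := double_pent_lo y; have := double_pent_hi y; rewrite ?e => *;
  case: (ltngtP x y) => // lt; nia.
Qed.

Lemma pentagonal_index_nat n m : (0 < n)%N -> pentagonal_index n m ->
  exists j, [/\ (0 < j <= n)%N, (-1) ^ m = (-1) ^+ j :> int &
                (n == pent_lo j) || (n == pent_hi j)].
Proof.
move=> n_gt0; have lo := double_pent_lo; have hi := double_pent_hi.
case: m => j [] pent; rewrite ?NegzE in pent.
- exists j; have := lo j; have := hi j => hi_j lo_j.
  have j_gt0 : (0 < j)%N by case: j pent hi_j lo_j => //=; nia.
  by split; [apply/andP; split; nia | | apply/orP; right; apply/eqP; nia].
- exists j; have := lo j; have := hi j => hi_j lo_j.
  have j_gt0 : (0 < j)%N by case: j pent hi_j lo_j => //=; nia.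
  by split; [apply/andP; split; nia | | apply/orP; left; apply/eqP; nia].
- exists j.+1; have := lo j.+1; have := hi j.+1 => hi_j lo_j.
  split; [apply/andP; split; nia | by rewrite /exprz invr_sign | ].
  by apply/orP; left; apply/eqP; nia.
- exists j.+1; have := lo j.+1; have := hi j.+1 => hi_j lo_j.
  split; [apply/andP; split; nia | by rewrite /exprz invr_sign | ].
  by apply/orP; right; apply/eqP; nia.
Qed.

Lemma pentagonal_coef_sum n N m : (0 < n <= N)%N -> pentagonal_index n m ->
  \sum_(j < N.+1) (-1) ^+ j * ((n == pent_lo j)%:R + (n == pent_hi j)%:R)
  = (-1) ^ m :> int.
Proof.
move=> /andP [n_gt0 le_nN] /(pentagonal_index_nat n_gt0).
move=> [j [/andP [j_gt0 le_jn] -> n_j]].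
have lt_jN : (j < N.+1)%N by lia.
rewrite (bigD1 (Ordinal lt_jN)) //= big1 ?addr0 => [|i ne_ij]; last first.
  have [n_i | /norP [/negbTE -> /negbTE ->]] :=
    boolP ((n == pent_lo i) || (n == pent_hi i)).
    by move: ne_ij; rewrite -val_eqE /= (pent_index_inj j_gt0 n_j n_i) eqxx.
  by rewrite addr0 mulr0.
have lt_lo_hi : (pent_lo j < pent_hi j)%N.
  by rewrite /pent_lo /pent_hi binS bin1; lia.
case/orP: n_j => /eqP ->; rewrite eqxx.
  by rewrite ltn_eqF // addr0 mulr1.
by rewrite gtn_eqF // add0r mulr1.
Qed.

Lemma nonpentagonal_coef_sum n N : (forall m, ~ pentagonal_index n m) ->
  \sum_(j < N.+1) (-1) ^+ j * ((n == pent_lo j)%:R + (n == pent_hi j)%:R)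
  = 0 :> int.
Proof.
move=> not_pent; rewrite big1 // => j _.
have := double_pent_lo j; have := double_pent_hi j => hi_j lo_j.
have [/eqP n_lo | _] := boolP (n == pent_lo j).
  by case: (not_pent (Posz j)); right; nia.
have [/eqP n_hi | _] := boolP (n == pent_hi j).
  by case: (not_pent (Posz j)); left; nia.
by rewrite addr0 mulr0.
Qed.

Lemma Pk_diff_pentagonal k n m : (0 < n <= k - 1)%N -> pentagonal_index n m ->
  (Pk_e k n)%:Z - (Pk_o k n)%:Z = (-1) ^ m.
Proof.
case: k => [|N]; first by rewrite sub0n; lia.
rewrite subn1 Pk_diff_coef => n_range pent.
by rewrite coef_euler_tail0 // (pentagonal_coef_sum n_range pent).
Qed.

Lemma Pk_diff_nonpentagonal k n : (0 < n <= k - 1)%N ->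
    (forall m, ~ pentagonal_index n m) ->
  (Pk_e k n)%:Z - (Pk_o k n)%:Z = 0.
Proof.
case: k => [|N]; first by rewrite sub0n; lia.
rewrite subn1 Pk_diff_coef => n_range not_pent.
by rewrite coef_euler_tail0 // nonpentagonal_coef_sum.
Qed.

Lemma Pk_par_eq0 k n b : ('C(k, 2) < n)%N -> Pk_par k n b = 0%N.
Proof.
move=> lt_n; apply/eqP; rewrite cards_eq0; apply/eqP/setP => S; rewrite !inE.
apply/negbTE/negP => /and3P [_ /eqP sum_S _].
have : (\sum_(i in S) (i : nat) <= \sum_(i < k) (i : nat))%N.
  rewrite [X in (X <= _)%N]big_mkcond.
  by apply: leq_sum => i _; case: (i \in S).
by rewrite sum_S -(big_mkord xpredT id) bin2_sum leqNgt lt_n.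
Qed.

Theorem theorem8 (k : nat) (hk : (0 < k)%N) (n : nat) (hn : (1 <= n)%N) :
  let diff := (Dk_e k n)%:Z - (Dk_o k n)%:Z in
  (forall m : int, pentagonal_index n m -> (n <= k - 1)%N ->
     diff = (-1) ^ m) /\
  ((k - 1 < n)%N -> (n <= k * (k - 1) %/ 2)%N ->
     diff = (Pk_e k n)%:Z - (Pk_o k n)%:Z) /\
  (~ ((exists m : int, pentagonal_index n m) /\ (n <= k - 1)%N) ->
   ~ ((k - 1 < n)%N /\ (n <= k * (k - 1) %/ 2)%N) ->
     diff = 0).
Proof.
rewrite /= (Dk_diff_eq_Pk_diff n hk).
have -> : (k * (k - 1) %/ 2 = 'C(k, 2))%N by rewrite subn1 divn2 bin2.
split; [|split] => // [m pent le_n | not_pent not_mid].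
  by apply: Pk_diff_pentagonal pent; rewrite hn.
have [le_n | lt_n] := leqP n (k - 1).
  apply: Pk_diff_nonpentagonal => [|m pent]; first by rewrite hn.
  by apply: not_pent; split; first exists m.
have lt_C : ('C(k, 2) < n)%N.
  by rewrite ltnNge; apply/negP => le_n; apply: not_mid.
by rewrite /Pk_e /Pk_o !Pk_par_eq0 // subrr.
Qed.
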